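(* Let $\mathcal A$ be a distributed algorithm, and for $n\ge 3$ let $t(C_n)$ denote its run-time on the $n$-vertex cycle graph $C_n$. If the sequence $t(C_3),t(C_4),\dots$ is unbounded, then $t(C_n)=\Omega(n)$.
   Context: Let $S$ be a (possibly infinite) set of states. An algorithm $\mathcal A$ on a graph $G=(V,E)$ with initial state assignment $\varphi:V\to S$ is modeled as follows: at step $\tau$ each vertex $v$ knows the states (and structure) of its radius-$\tau$ neighborhood $N(v,\tau)$, and halts or continues according to the value of a fixed function $f$ from state-labeled (rooted) graphs to $\{\textsc{halt},\textsc{continue}\}$ applied to $N(v,\tau)$; no other information (e.g. identifiers beyond the states, or the size of the graph) is available. $\mathcal A$ halts in time $t$ on input $(G,\varphi)$ if every vertex halts at some time $\tau\le t$ and some vertex halts exactly at time $t$. The run-time $t(G)$ of $\mathcal A$ on $G$ is the maximum over all initial state assignments $\varphi$ of the halting time on $(G,\varphi)$. *)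

From mathcomp Require Import all_boot.
Set Implicit Arguments. Unset Strict Implicit. Unset Printing Implicit Defensive.

(* A state-labelled rooted graph with k vertices is represented on the
   canonical vertex type 'I_k : adjacency relation, root, labelling.
   An algorithm is a function [f] from such objects to bool
   (true = HALT, false = CONTINUE) which is invariant under
   isomorphism (relabelling of the vertices), i.e. it really is a
   function of the isomorphism class of the rooted labelled graph. *)
Definition local_rule (S : Type) :=
  forall k : nat, rel 'I_k -> 'I_k -> ('I_k -> S) -> bool.

Definition iso_invariant (S : Type) (f : local_rule S) : Prop :=
  forall (k : nat) (p : 'I_k -> 'I_k), injective p ->
  forall (e : rel 'I_k) (r : 'I_k) (lab : 'I_k -> S),
    f k e (p r) lab = f k (fun i j => e (p i) (p j)) r (fun i => lab (p i)).

Fixpoint ball (V : finType) (e : rel V) (v : V) (t : nat) : {set V} :=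
  match t with
  | 0 => [set v]
  | t'.+1 => ball e v t' :|: [set u | [exists w in ball e v t', e w u]]
  end.

Lemma ball_root (V : finType) (e : rel V) (v : V) (t : nat) : v \in ball e v t.
Proof.
elim: t => [|t IH] /=; first by rewrite in_set1.
by rewrite in_setU IH.
Qed.

(* f applied to the radius-t neighbourhood N(v,t) (the subgraph induced on
   the ball, rooted at v, labelled by phi), transported to 'I_#|ball|
   via the canonical enumeration of the ball.  By [iso_invariant] the
   choice of enumeration is irrelevant. *)
Definition halts_at (S : Type) (f : local_rule S) (V : finType) (e : rel V)
    (phi : V -> S) (v : V) (t : nat) : bool :=
  let B := ball e v t in
  f #|B| (fun i j => e (enum_val i) (enum_val j))
         (enum_rank_in (ball_root e v t) v)
         (fun i => phi (enum_val i)).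

(* The algorithm halts within time t on G (for every initial state
   assignment): i.e. the run-time t(G) is at most t. *)
Definition halts_within (S : Type) (f : local_rule S) (V : finType) (e : rel V)
    (t : nat) : Prop :=
  forall (phi : V -> S) (v : V), exists2 tau, tau <= t & halts_at f e phi v tau.

Definition cycle_adj (n : nat) : rel 'I_n :=
  fun i j => (val j == i.+1 %% n) || (val i == j.+1 %% n).
Arguments cycle_adj n : clear implicits.

(* If the algorithm halts within time t on a cycle C_n with n >= 2t + 2, then
   for every m >= 2t + 2 each radius-t view in C_m is isomorphic (via a
   rotation followed by cutting and re-gluing the cycle far from the centre)
   to a radius-t view in C_n, so the algorithm also halts within t on C_m.
   On the finitely many shorter cycles C_m, m < 2t + 2, it halts within
   m <= 2t + 2, since after #|V| rounds the view no longer changes.  Thus a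
   run-time t < n/4 on some C_n would bound all run-times by 2t + 2,
   contradicting unboundedness; hence t(C_n) >= n/4. *)
From mathcomp Require Import all_boot zify.
From Stdlib Require Import FunctionalExtensionality.

Set Implicit Arguments.
Unset Strict Implicit.
Unset Printing Implicit Defensive.

Section Balls.
Context {V : finType} (e : rel V).

Lemma ball_fixed_from v s :
  ball e v s.+1 = ball e v s -> forall k, ball e v (s + k) = ball e v s.
Proof.
move=> fixed; elim=> [|k IHk]; first by rewrite addn0.
by rewrite addnS /= IHk; exact: fixed.
Qed.

Lemma ball_fixed_or_card_gt v t :
  (exists2 s, s <= t & ball e v s.+1 = ball e v s) \/ t < #|ball e v t|.
Proof.
elim: t => [|t [[s le_st fixed]|IHt]]; first by right; rewrite /= cards1.
  by left; exists s => //; apply: leqW.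
have [fixed|grows] := eqVneq (ball e v t.+1) (ball e v t); first by left; exists t.
right; apply: leq_ltn_trans IHt _; apply: proper_card.
by rewrite properEneq eq_sym grows subsetUl.
Qed.

Lemma ball_card_fixed v t : #|V| <= t -> ball e v t = ball e v #|V|.
Proof.
move=> le_Vt; have [[s le_sV fixed]|] := ball_fixed_or_card_gt v #|V|.
  by rewrite -(subnKC le_Vt) -(subnKC le_sV) -!addnA !ball_fixed_from.
by rewrite ltnNge max_card.
Qed.

End Balls.

Lemma ball_hom {V V' : finType} {e : rel V} {e' : rel V'} {g : V -> V'} :
  (forall x y, e x y -> e' (g x) (g y)) ->
  forall v t x, x \in ball e v t -> g x \in ball e' (g v) t.
Proof.
move=> g_hom v; elim=> [|t IHt] x /=; first by rewrite !in_set1 => /eqP ->.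
rewrite !inE => /orP [/IHt -> //|/existsP [w /andP [w_in ewx]]].
by apply/orP; right; apply/existsP; exists (g w); rewrite IHt //= g_hom.
Qed.

Section LocalViews.
Context {S : Type} {f : local_rule S} (finv : iso_invariant f).

Definition rule_along {V : finType} (e : rel V) (phi : V -> S) {k : nat}
    (en : 'I_k -> V) (r : 'I_k) : bool :=
  @f k (fun i j => e (en i) (en j)) r (fun i => phi (en i)).

Lemma halts_atE (V : finType) (e : rel V) phi v t :
  halts_at f e phi v t =
  rule_along e phi (@enum_val _ (mem (ball e v t)))
             (enum_rank_in (ball_root e v t) v).
Proof. by []. Qed.

Lemma rule_along_reindex (V : finType) (e : rel V) phi k k' (ekk' : k = k')
    (en : 'I_k -> V) (en' : 'I_k' -> V) r r' :
  injective en -> injective en' -> (forall i, exists j, en j = en' i) ->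
  en r = en' r' -> rule_along e phi en r = rule_along e phi en' r'.
Proof.
subst k' => en_inj en'_inj en_onto en_r.
pose p i := odflt i [pick j | en j == en' i].
have enpE i : en (p i) = en' i.
  rewrite /p; case: pickP => [j /eqP //|no_j]; have [j ej] := en_onto i.
  by have := no_j j; rewrite ej eqxx.
have p_inj : injective p by move=> i1 i2 pi12; apply: en'_inj; rewrite -!enpE pi12.
have -> : r = p r' by apply: en_inj; rewrite enpE.
rewrite /rule_along finv //.
congr (@f _ _ _ _).
- by do 2!apply: functional_extensionality => ?; rewrite !enpE.
- by apply: functional_extensionality => ?; rewrite enpE.
Qed.

Lemma halts_at_ball_iso (V1 V2 : finType) (e1 : rel V1) (e2 : rel V2)
    phi1 phi2 v1 v2 t1 t2 (g : V1 -> V2) (h : V2 -> V1) :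
  let B1 := ball e1 v1 t1 in let B2 := ball e2 v2 t2 in
  {in B1, forall x, g x \in B2} -> {in B2, forall y, h y \in B1} ->
  {in B1, cancel g h} -> {in B2, cancel h g} ->
  {in B1 &, forall x y, e2 (g x) (g y) = e1 x y} ->
  {in B1, forall x, phi2 (g x) = phi1 x} -> g v1 = v2 ->
  halts_at f e1 phi1 v1 t1 = halts_at f e2 phi2 v2 t2.
Proof.
move=> B1 B2 gB hB gK hK g_adj g_phi g_root.
have g_onto : g @: B1 = B2.
  apply/setP => y; apply/imsetP/idP => [[x x_in ->]|y_in]; first exact: gB.
  by exists (h y); rewrite ?hK ?hB.
have cardB : #|B1| = #|B2|.
  by rewrite -g_onto card_in_imset // => x y x_in y_in /(congr1 h); rewrite !gK.
rewrite !halts_atE.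
transitivity (rule_along e2 phi2 (fun i => g (@enum_val _ (mem B1) i))
                         (enum_rank_in (ball_root e1 v1 t1) v1)).
  congr (@f _ _ _ _).
  - by do 2!apply: functional_extensionality => ?; rewrite g_adj ?enum_valP.
  - by apply: functional_extensionality => ?; rewrite g_phi ?enum_valP.
apply: rule_along_reindex; first exact: cardB.
- by move=> i j /(congr1 h); rewrite !gK ?enum_valP //; apply: enum_val_inj.
- exact: enum_val_inj.
- move=> i; exists (enum_rank_in (ball_root e1 v1 t1) (h (enum_val i))).
  by rewrite enum_rankK_in ?hK ?hB ?enum_valP.
- by rewrite !enum_rankK_in ?g_root ?ball_root.
Qed.

Lemma halts_at_le_card (V : finType) (e : rel V) phi v tau :
  halts_at f e phi v tau -> exists2 tau', tau' <= #|V| & halts_at f e phi v tau'.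
Proof.
have [le_tau|lt_tau] := leqP tau #|V|; first by exists tau.
exists #|V| => //; rewrite -(@halts_at_ball_iso _ _ e e phi phi v v tau _ id id) //.
all: by rewrite /= (ball_card_fixed e v (ltnW lt_tau)).
Qed.

End LocalViews.

Lemma modn_succ_lt n a : a < n -> a.+1 %% n = if a.+1 == n then 0 else a.+1.
Proof.
by move=> lt_an; case: eqP => [->|ne]; rewrite ?modnn // modn_small //; lia.
Qed.

Lemma cycle_adjE n (x y : 'I_n) : cycle_adj n x y =
  [|| (y : nat) == x.+1, (x.+1 == n) && (y == 0 :> nat), (x : nat) == y.+1
    | (y.+1 == n) && (x == 0 :> nat)].
Proof.
rewrite /cycle_adj !modn_succ_lt //.
have := ltn_ord x; have := ltn_ord y.
by case Ex: (x.+1 == n); case Ey: (y.+1 == n); move: Ex Ey => /=; lia.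
Qed.

Lemma cycle_ball0 n (z : 'I_n) t : z = 0 :> nat ->
  ball (cycle_adj n) z t = [set u : 'I_n | (u <= t) || (n <= u + t)].
Proof.
move=> z0; elim: t => [|t IHt]; apply/setP => u; rewrite /= ?IHt !inE.
  by rewrite -val_eqE /= z0; have := ltn_ord u; lia.
have lt_un := ltn_ord u.
apply/idP/idP => [/orP [|/existsP [w]]|in_ball]; first by lia.
  by rewrite inE cycle_adjE; have := ltn_ord w; move: (nat_of_ord w) => b; lia.
case/boolP: ((u <= t) || (n <= u + t)) => //= far.
apply/existsP; have [le_ut1|lt_t1u] := leqP u t.+1.
  have lt_tn : t < n by lia.
  by exists (Ordinal lt_tn); rewrite inE cycle_adjE /=; lia.
have lt_wn : (if u.+1 == n then 0 else u.+1) < n by case: eqP; lia.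
by exists (Ordinal lt_wn); rewrite inE cycle_adjE /=; case: eqP; lia.
Qed.

Definition crot n (k : nat) (i : 'I_n) : 'I_n :=
  Ordinal (ltn_pmod (i + k) (leq_ltn_trans (leq0n i) (ltn_ord i))).
Arguments crot {n} k i.

Lemma crot_adj n k (x y : 'I_n) :
  cycle_adj n (crot k x) (crot k y) = cycle_adj n x y.
Proof.
have shiftE (a b : 'I_n) :
  ((b + k) %% n == ((a + k) %% n).+1 %% n) = (val b == a.+1 %% n).
  rewrite -addn1 modnDml addnAC eqn_modDr.
  by rewrite [X in X == _]modn_small ?addn1.
by rewrite /cycle_adj /= !shiftE.
Qed.

Lemma crotK n (k : 'I_n) : cancel (@crot n k) (crot (n - k)).
Proof.
move=> i; apply: val_inj => /=.
by rewrite modnDml -addnA subnKC 1?ltnW // modnDr modn_small.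
Qed.

Lemma crotKV n (k : 'I_n) : cancel (@crot n (n - k)) (crot k).
Proof.
move=> i; apply: val_inj => /=.
by rewrite modnDml -addnA subnK 1?ltnW // modnDr modn_small.
Qed.

Lemma crot0 n (k z : 'I_n) : z = 0 :> nat -> crot k z = k.
Proof. by move=> z0; apply: val_inj => /=; rewrite z0 add0n modn_small. Qed.

(* Keeps the arc [0, t] of C_n and moves the arc [n - t, n) onto [m - t, m);
   [d0] is a junk value for the vertices in between. *)
Definition cycle_resize n m t (d0 : 'I_m) (i : 'I_n) : 'I_m :=
  insubd d0 (if i <= t then val i else i + m - n).
Arguments cycle_resize {n m} t d0 i.

Lemma cycle_resizeE n m t (d0 : 'I_m) (i : 'I_n) : (i <= t -> i < m) ->
  cycle_resize t d0 i = (if i <= t then i : nat else i + m - n) :> nat.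
Proof.
move=> small_lt; rewrite /cycle_resize insubdK // unfold_in /=.
have := ltn_ord i; have := ltn_ord d0.
by case: (leqP i t) => [le_it|]; [have := small_lt le_it|]; lia.
Qed.

Local Ltac cycle_lia :=
  repeat match goal with |- context [nat_of_ord ?x] =>
    let lt_x := fresh in have lt_x := ltn_ord x; move: lt_x; move: (nat_of_ord x) => ? end;
  repeat match goal with |- context [if ?b then _ else _] =>
    let Eb := fresh in case Eb: b; move: Eb end;
  lia.

Section CycleViews.
Context {S : Type} {f : local_rule S} (finv : iso_invariant f).

Lemma halts_at_crot n (z v : 'I_n) phi tau : z = 0 :> nat ->
  halts_at f (cycle_adj n) (fun i => phi (crot v i)) z tau =
  halts_at f (cycle_adj n) phi v tau.
Proof.
move=> z0; have crot_hom k x y : cycle_adj n x y -> cycle_adj n (crot k x) (crot k y).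
  by rewrite crot_adj.
apply: (@halts_at_ball_iso _ _ finv _ _ _ _ _ _ _ _ _ _ (crot v) (crot (n - v))).
- by move=> x /(ball_hom (crot_hom v)); rewrite (crot0 v z0).
- have crot_v : crot (n - v) v = z by rewrite -[X in crot _ X](crot0 v z0) crotK.
  by move=> y /(ball_hom (crot_hom (n - v))); rewrite crot_v.
- by move=> x _; rewrite crotK.
- by move=> y _; rewrite crotKV.
- by move=> x y _ _; rewrite crot_adj.
- by [].
- exact: crot0.
Qed.

Lemma halts_at_cycle_resize n m t (zn : 'I_n) (zm : 'I_m) tau phi :
  zn = 0 :> nat -> zm = 0 :> nat -> 2 * t + 2 <= n -> 2 * t + 2 <= m ->
  tau <= t ->
  halts_at f (cycle_adj n) (fun i => phi (cycle_resize t zm i)) zn tau =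
  halts_at f (cycle_adj m) phi zm tau.
Proof.
move=> zn0 zm0 tn tm le_tau.
apply: (@halts_at_ball_iso _ _ finv _ _ _ _ _ _ _ _ _ _
          (cycle_resize t zm) (cycle_resize t zn));
  rewrite ?cycle_ball0 //.
- by move=> x; rewrite !inE cycle_resizeE; cycle_lia.
- by move=> x; rewrite !inE cycle_resizeE; cycle_lia.
- move=> x; rewrite !inE => x_in; apply: val_inj; move: x_in => /=.
  by rewrite cycle_resizeE cycle_resizeE; cycle_lia.
- move=> x; rewrite !inE => x_in; apply: val_inj; move: x_in => /=.
  by rewrite cycle_resizeE cycle_resizeE; cycle_lia.
- by move=> x y; rewrite !inE !cycle_adjE !cycle_resizeE; cycle_lia.
- by apply: val_inj; rewrite /= cycle_resizeE zn0 ?zm0 //; lia.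
Qed.

Lemma halts_within_cycle_resize n m t :
  2 * t + 2 <= n -> 2 * t + 2 <= m ->
  halts_within f (cycle_adj n) t -> halts_within f (cycle_adj m) t.
Proof.
move=> tn tm halts_n phi v.
have [n_gt0 m_gt0] : 0 < n /\ 0 < m by split; lia.
pose zn := Ordinal n_gt0; pose zm := Ordinal m_gt0.
have [tau le_tau halts_tau] := halts_n (fun i => phi (crot v (cycle_resize t zm i))) zn.
exists tau => //.
rewrite -(@halts_at_crot _ zm) // -(@halts_at_cycle_resize n m t zn) //.
Qed.

Lemma cycle_runtime_gap n t :
  (forall m, 3 <= m -> forall (phi : 'I_m -> S) v,
     exists tau, halts_at f (cycle_adj m) phi v tau) ->
  2 * t + 2 <= n -> halts_within f (cycle_adj n) t ->
  forall m, 3 <= m -> halts_within f (cycle_adj m) (2 * t + 2).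
Proof.
move=> halts tn halts_n m m_ge3 phi v.
have [tm|mt] := leqP (2 * t + 2) m.
  have [tau le_tau halts_tau] := halts_within_cycle_resize tn tm halts_n phi v.
  by exists tau => //; lia.
have [tau halts_tau] := halts m m_ge3 phi v.
have [tau' le_tau' halts_tau'] := halts_at_le_card finv halts_tau.
by exists tau' => //; move: le_tau'; rewrite card_ord; lia.
Qed.

End CycleViews.

Theorem proposition4 (S : Type) (f : local_rule S) (finv : iso_invariant f)
  (halts : forall n, 3 <= n -> forall (phi : 'I_n -> S) (v : 'I_n),
             exists tau, halts_at f (cycle_adj n) phi v tau)
  (unbounded : forall M, exists2 n, 3 <= n & ~ halts_within f (cycle_adj n) M) :
  exists d N, 0 < d /\
    forall n, N <= n -> forall t, halts_within f (cycle_adj n) t -> n <= d * t.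
Proof.
exists 4, 3; split => // n n_ge3 t halts_n; rewrite leqNgt; apply/negP => fast.
have tn : 2 * t + 2 <= n by lia.
have [m m_ge3] := unbounded (2 * t + 2); apply.
exact: (cycle_runtime_gap finv halts tn halts_n m_ge3).
Qed.
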